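(* Let $r,s\ge2$ be fixed integers such that either $s\ge5$ and $r>\rho(s)$, or $s\in\{2,3,4\}$ and $(r,s)\ne(2,2)$. Then: (a) Every local maximum of $\varphi$ on $K$ either equals $(0,0)$ or lies in the interior of $K$. (b) For every stationary point $(\alpha,\beta)$ of $\varphi$ in the interior of $K$, there exists $x\in(-1,\infty)$ such that $\alpha=\alpha(x)$, $\beta=\beta(x)$, and \[ (rs-r-s)\Big(1+\frac{x}{r-1}\Big)^{s-2}=(1+x)\Big(rs-r-s+sx+\frac{x(x+1)}{r-1}\Big).\tag{$\ast$} \] (c) Let $f:(-1,\infty)\to\mathbb R$ be defined by $f(x)=\varphi(\alpha(x),\beta(x))$. If $x\in(-1,\infty)$ is a stationary point of $f$, then $x$ satisfies $(\ast)$.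
   Context: Let $g(x)=x\log x$ for $x>0$, with $g(0)=0$. Let \[ K=\{(\alpha,\beta)\in\mathbb R^2:\alpha,\beta\ge0,\ (s-1)\alpha+\beta\le1\}. \] Define $\varphi:K\to\mathbb R$ by \begin{align*} \varphi(\alpha,\beta)&=(\alpha+\beta)\log(r-1)+g(\alpha+\beta)+g(r-1-\alpha-\beta)-\tfrac{2}{s-1}g(\beta)-g(\alpha)\\ &\quad-\tfrac{1}{s(s-1)}g(rs-r-s-s\beta)-\tfrac{1}{s-1}g(1-(s-1)\alpha-\beta). \end{align*} For $x\ge-1$, let \[ \alpha(x)=\frac{1+x}{rs-r+sx+\frac{x(x+1)}{r-1}},\qquad \beta(x)=\frac{rs-r-s}{rs-r+sx+\frac{x(x+1)}{r-1}}. \] For $s\ge5$, $\rho(s)$ is the unique real number in $(2,\infty)$ satisfying \[ (s-1)^{\rho}(\rho-1)^{s(\rho-1)}=\rho^{\rho s-\rho-s}(\rho s-\rho-s)^{(\rho s-\rho-s)/(s-1)}. \] *)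

From Stdlib Require Import Reals Lra.
From Coquelicot Require Import Coquelicot.
Open Scope R_scope.

(* g(x) = x log x for x > 0, g(0) = 0.  (Stdlib's ln is 0 on x <= 0, so this
   also gives g 0 = 0; values at negative arguments are never used in the
   statement.) *)
Definition g (x : R) : R := if Rlt_dec 0 x then x * ln x else 0.

Section Phi.
Variables rn sn : nat.
Let r : R := INR rn.
Let s : R := INR sn.

Definition inK (a b : R) : Prop := 0 <= a /\ 0 <= b /\ (s - 1) * a + b <= 1.

Definition intK (a b : R) : Prop := 0 < a /\ 0 < b /\ (s - 1) * a + b < 1.

Definition phi (a b : R) : R :=
  (a + b) * ln (r - 1) + g (a + b) + g (r - 1 - a - b)
  - 2 / (s - 1) * g b - g a
  - 1 / (s * (s - 1)) * g (r * s - r - s - s * b)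
  - 1 / (s - 1) * g (1 - (s - 1) * a - b).

(* Natural domain of phi inside K: all arguments of g are >= 0. *)
Definition domphi (a b : R) : Prop :=
  inK a b /\ 0 <= r - 1 - a - b /\ 0 <= r * s - r - s - s * b.

(* Points where all arguments of g are > 0 (phi is smooth near such points). *)
Definition regphi (a b : R) : Prop :=
  0 < a /\ 0 < b /\ 0 < r - 1 - a - b /\ 0 < r * s - r - s - s * b
  /\ 0 < 1 - (s - 1) * a - b.

Definition local_max_phi (a b : R) : Prop :=
  domphi a b /\
  exists eps : R, 0 < eps /\
    forall a' b' : R, domphi a' b' -> Rabs (a' - a) < eps -> Rabs (b' - b) < eps ->
      phi a' b' <= phi a b.

Definition stationary_phi (a b : R) : Prop :=
  is_derive (fun a' => phi a' b) a 0 /\ is_derive (fun b' => phi a b') b 0.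

Definition denom (x : R) : R := r * s - r + s * x + x * (x + 1) / (r - 1).
Definition alphax (x : R) : R := (1 + x) / denom x.
Definition betax (x : R) : R := (r * s - r - s) / denom x.

Definition fx (x : R) : R := phi (alphax x) (betax x).

Definition star (x : R) : Prop :=
  (r * s - r - s) * (1 + x / (r - 1)) ^ (sn - 2)%nat
  = (1 + x) * (r * s - r - s + s * x + x * (x + 1) / (r - 1)).
End Phi.

Definition rho_eq (s rho : R) : Prop :=
  Rpower (s - 1) rho * Rpower (rho - 1) (s * (rho - 1))
  = Rpower rho (rho * s - rho - s)
    * Rpower (rho * s - rho - s) ((rho * s - rho - s) / (s - 1)).

Definition is_rho (s rho : R) : Prop :=
  2 < rho /\ rho_eq s rho /\ (forall rho', 2 < rho' -> rho_eq s rho' -> rho' = rho).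

From Stdlib Require Import Reals Lra Lia List.
From Coquelicot Require Import Coquelicot.
Import ListNotations.
Open Scope R_scope.

(* None of the three claims needs the condition r > rho(s): they hold as soon
   as (r, s) <> (2, 2), i.e. k := rs - r - s > 0.

   (a) Near a boundary point of K other than the origin, phi restricted to a
       suitable ray into K is a linear function plus a sum of weighted terms
       w g(x + c t), one of which has x = 0, c > 0, w < 0.  Such a term grows
       like -c w t ln t, with infinite slope at t = 0+, so phi increases along
       the ray and the point is not a local maximum.
       Pa = 0 is equivalent to a polynomial identity which says exactly that
       the point is (alpha(x), beta(x)) with x = k a / b - 1.  Along this
       curve all arguments of the logarithms factor, so Pa vanishes
       identically and (s - 1) Pb is the logarithm of the ratio of the two
       sides of (star).
   (c) By the chain rule f' = alpha' Pa + beta' Pb = beta' Pb with beta' < 0,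
       so f' = 0 forces Pb = 0, i.e. (star). *)

Lemma g_pos x : 0 < x -> g x = x * ln x.
Proof. intro Hx. unfold g. destruct (Rlt_dec 0 x); [reflexivity | lra]. Qed.

Lemma g_0 : g 0 = 0.
Proof. unfold g. destruct (Rlt_dec 0 0); [lra | reflexivity]. Qed.

Lemma ln_le_sub1 u : 0 < u -> ln u <= u - 1.
Proof.
  intro Hu. pose proof (exp_ineq1_le (ln u)) as H. rewrite exp_ln in H; lra.
Qed.

Lemma is_derive_g x : 0 < x -> is_derive g x (ln x + 1).
Proof.
  intro Hx.
  apply is_derive_ext_loc with (f := fun z => z * ln z).
  - exists (mkposreal x Hx). intros z Hz.
    unfold ball in Hz; simpl in Hz; unfold AbsRing_ball, abs, minus, plus, opp in Hz; simpl in Hz.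
    apply Rabs_def2 in Hz. rewrite g_pos; [reflexivity | lra].
  - auto_derive; [exact Hx |]. field. lra.
Qed.

Lemma g_above_tangent x y : 0 < x -> 0 <= y -> g x + (ln x + 1) * (y - x) <= g y.
Proof.
  intros Hx [Hy | <-].
  - rewrite (g_pos x Hx), (g_pos y Hy).
    pose proof (ln_le_sub1 (x / y) ltac:(apply Rdiv_lt_0_compat; lra)) as L.
    rewrite ln_div in L by lra.
    assert (E : y * (x / y - 1) = x - y) by (field; lra).
    assert (y * (ln x - ln y) <= y * (x / y - 1)) by (apply Rmult_le_compat_l; lra).
    nra.
  - rewrite (g_pos x Hx), g_0. nra.
Qed.

Lemma g_below_tangent x y : 0 < x -> 0 <= y ->
  g y <= g x + (ln x + 1) * (y - x) + (y - x) ^ 2 / x.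
Proof.
  intros Hx [Hy | <-].
  - rewrite (g_pos x Hx), (g_pos y Hy).
    pose proof (ln_le_sub1 (y / x) ltac:(apply Rdiv_lt_0_compat; lra)) as L.
    rewrite ln_div in L by lra.
    assert (y * (ln y - ln x) <= y * (y / x - 1)) by (apply Rmult_le_compat_l; lra).
    assert (E : (y - x) ^ 2 / x = y * (y / x - 1) - y + x) by (field; lra).
    rewrite E. nra.
  - rewrite (g_pos x Hx), g_0.
    assert (E : (0 - x) ^ 2 / x = x) by (field; lra). rewrite E. nra.
Qed.

Lemma g_mult c t : 0 <= c -> 0 < t -> g (c * t) = t * g c + c * g t.
Proof.
  intros [Hc | <-] Ht.
  - rewrite !g_pos by nra. rewrite ln_mult by lra. ring.
  - rewrite Rmult_0_l, g_0. ring.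
Qed.

(** A term e contributes wt e * g (base e + slope e * t) for t >= 0.  If the
    base is 0, the slope positive and the weight negative, the term behaves
    like -c t ln t, whose slope at t = 0+ is +oo; such a term dominates every
    other term, which is at most linear (plus quadratic) in t. *)

Record eterm := ET { wt : R; base : R; slope : R }.

Definition arg (e : eterm) (t : R) : R := base e + slope e * t.

Definition esum (es : list eterm) (t : R) : R :=
  fold_right (fun e acc => wt e * g (arg e t) + acc) 0 es.

(* The ray stays in the domain of g for small t, and a vanishing base only
   occurs with a term that does not decrease the sum. *)
Definition admissible (e : eterm) : Prop :=
  0 <= base e /\ (0 < base e \/ (0 <= slope e /\ wt e <= 0)).

Lemma admissible_pos w x c : 0 < x -> admissible (ET w x c).
Proof. unfold admissible; simpl; lra. Qed.

Lemma admissible_nonincreasing w x c : 0 <= x -> 0 <= c -> w <= 0 -> admissible (ET w x c).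
Proof. unfold admissible; simpl; lra. Qed.

(* A term with infinite positive slope at t = 0+. *)
Definition active (e : eterm) : Prop :=
  base e = 0 /\ 0 < slope e /\ wt e < 0.

Definition feasible (es : list eterm) (t : R) : Prop :=
  List.Forall (fun e => 0 <= arg e t) es.

Lemma eterm_expansion e : admissible e ->
  exists L Q z, 0 <= Q /\ z <= 0 /\ (active e -> z < 0) /\
    forall t, 0 < t <= 1 -> 0 <= arg e t ->
      t * L - t ^ 2 * Q + z * g t <= wt e * (g (arg e t) - g (base e)).
Proof.
  destruct e as [w x c]; unfold admissible, active, arg; simpl.
  intros [[Hx | <-] Hcase].
  - exists (w * (ln x + 1) * c), (Rabs w * c ^ 2 / x), 0.
    split; [| split; [lra | split; [lra |]]].
    { apply Rmult_le_pos; [apply Rmult_le_pos; [apply Rabs_pos | apply pow2_ge_0] |].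
      apply Rlt_le, Rinv_0_lt_compat; lra. }
    intros t Ht Hy.
    pose proof (g_above_tangent x _ Hx Hy) as Lo.
    pose proof (g_below_tangent x _ Hx Hy) as Up.
    replace (x + c * t - x) with (c * t) in Lo, Up by ring.
    replace ((c * t) ^ 2 / x) with (t ^ 2 * (c ^ 2 / x)) in Up by (field; lra).
    assert (0 <= t ^ 2 * (c ^ 2 / x)).
    { apply Rmult_le_pos; [apply pow2_ge_0 |].
      apply Rmult_le_pos; [apply pow2_ge_0 | apply Rlt_le, Rinv_0_lt_compat; lra]. }
    replace (t * (w * (ln x + 1) * c) - t ^ 2 * (Rabs w * c ^ 2 / x) + 0 * g t)
      with (w * ((ln x + 1) * (c * t)) - Rabs w * (t ^ 2 * (c ^ 2 / x)))
      by (unfold Rdiv; ring).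
    destruct (Rle_dec 0 w) as [Hw | Hw].
    + rewrite Rabs_right by lra.
      assert (w * ((ln x + 1) * (c * t)) <= w * (g (x + c * t) - g x))
        by (apply Rmult_le_compat_l; lra).
      assert (0 <= w * (t ^ 2 * (c ^ 2 / x))) by (apply Rmult_le_pos; lra).
      lra.
    + rewrite Rabs_left by lra.
      assert (w * ((ln x + 1) * (c * t) + t ^ 2 * (c ^ 2 / x)) <= w * (g (x + c * t) - g x))
        by (apply Rmult_le_compat_neg_l; lra).
      lra.
  - destruct Hcase as [H0 | [Hc Hw]]; [lra |].
    exists (w * g c), 0, (w * c). split; [lra | split; [nra | split; [nra |]]].
    intros t Ht _. rewrite Rplus_0_l, g_mult, g_0 by lra. lra.
Qed.

Lemma esum_expansion es : List.Forall admissible es ->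
  exists L Q z, 0 <= Q /\ z <= 0 /\ (List.Exists active es -> z < 0) /\
    forall t, 0 < t <= 1 -> feasible es t ->
      t * L - t ^ 2 * Q + z * g t <= esum es t - esum es 0.
Proof.
  induction 1 as [| e es He _ IH].
  - exists 0, 0, 0. split; [lra | split; [lra | split]].
    + intro Hex. inversion Hex.
    + intros t _ _. simpl. lra.
  - destruct (eterm_expansion e He) as [L1 [Q1 [z1 [HQ1 [Hz1 [Ha1 H1]]]]]].
    destruct IH as [L2 [Q2 [z2 [HQ2 [Hz2 [Ha2 H2]]]]]].
    exists (L1 + L2), (Q1 + Q2), (z1 + z2).
    split; [lra | split; [lra | split]].
    + intro Hex.
      inversion Hex as [? ? Hact | ? ? Hact]; subst;
        [specialize (Ha1 Hact) | specialize (Ha2 Hact)]; lra.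
    + intros t Ht Hf. inversion_clear Hf as [| ? ? Hy Hf'].
      specialize (H1 t Ht Hy). specialize (H2 t Ht Hf').
      simpl. unfold arg at 2. rewrite Rmult_0_r, Rplus_0_r. lra.
Qed.

Lemma esum_feasible es : List.Forall admissible es ->
  exists d, 0 < d /\ forall t, 0 < t < d -> feasible es t.
Proof.
  induction 1 as [| [w x c] es [Hx Hcase] _ [d [Hd IH]]].
  - exists 1. split; [lra | intros; constructor].
  - simpl in Hx, Hcase.
    assert (Hd1 : exists d1, 0 < d1 /\ forall t, 0 < t < d1 -> 0 <= x + c * t).
    { destruct (Rle_dec 0 c) as [Hc | Hc].
      - exists 1. split; [lra | intros t Ht; nra].
      - destruct Hcase as [Hx' | [Hc' _]]; [| lra].
        exists (x / - c). split; [apply Rdiv_lt_0_compat; lra |].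
        intros t [Ht1 Ht2].
        apply (Rmult_lt_compat_r (- c)) in Ht2; [| lra].
        unfold Rdiv in Ht2. rewrite Rmult_assoc, Rinv_l in Ht2 by lra. lra. }
    destruct Hd1 as [d1 [Hd1 H1]].
    exists (Rmin d d1). split; [now apply Rmin_pos |].
    intros t Ht. constructor.
    + apply H1. pose proof (Rmin_r d d1). lra.
    + apply IH. pose proof (Rmin_l d d1). lra.
Qed.

(* For small t the entropy gain z g t (z < 0) beats any linear and quadratic
   terms, since -ln t -> +oo. *)
Lemma entropy_dominates L Q z eps : 0 <= Q -> z < 0 -> 0 < eps ->
  exists t, 0 < t < eps /\ t <= 1 /\ 0 < t * L - t ^ 2 * Q + z * g t.
Proof.
  intros HQ Hz He.
  set (M := (Rabs L + Q + 1) / - z).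
  set (t := Rmin (eps / 2) (Rmin 1 (exp (- M)))).
  assert (Ht : 0 < t) by (apply Rmin_pos; [lra | apply Rmin_pos; [lra | apply exp_pos]]).
  assert (Ht1 : t <= 1) by (eapply Rle_trans; [apply Rmin_r | apply Rmin_l]).
  assert (HtM : t <= exp (- M)) by (eapply Rle_trans; [apply Rmin_r | apply Rmin_r]).
  assert (Hte : t < eps) by (eapply Rle_lt_trans; [apply Rmin_l | lra]).
  exists t. split; [lra | split; [lra |]].
  rewrite g_pos by lra.
  assert (Hl : ln t <= - M) by (rewrite <- (ln_exp (- M)); apply ln_le; lra).
  assert (Hzl : Rabs L + Q + 1 <= z * ln t).
  { replace (Rabs L + Q + 1) with (z * - M) by (unfold M; field; lra).
    apply Rmult_le_compat_neg_l; lra. }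
  pose proof (Rle_abs (- L)). rewrite Rabs_Ropp in *.
  assert (t * Q <= Q) by (rewrite <- (Rmult_1_l Q) at 2; apply Rmult_le_compat_r; lra).
  replace (t * L - t ^ 2 * Q + z * (t * ln t)) with (t * (L - t * Q + z * ln t)) by ring.
  apply Rmult_lt_0_compat; lra.
Qed.

Lemma esum_increases es l eps : List.Forall admissible es -> List.Exists active es -> 0 < eps ->
  exists t, 0 < t < eps /\ feasible es t /\ esum es 0 < l * t + esum es t.
Proof.
  intros Hadm Hact He.
  destruct (esum_expansion es Hadm) as [L [Q [z [HQ [Hz [Ha H]]]]]].
  destruct (esum_feasible es Hadm) as [d [Hd Hf]].
  destruct (entropy_dominates (L + l) Q z (Rmin eps d) HQ (Ha Hact))
    as [t [[Ht0 Ht] [Ht1 Hpos]]]; [now apply Rmin_pos |].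
  pose proof (Rmin_l eps d). pose proof (Rmin_r eps d).
  assert (Hft : feasible es t) by (apply Hf; lra).
  exists t. split; [lra | split; [exact Hft |]].
  specialize (H t ltac:(lra) Hft). lra.
Qed.

Section Boundary.

Variables rn sn : nat.
Local Notation r := (INR rn).
Local Notation s := (INR sn).

Hypothesis hr : 2 <= r.
Hypothesis hs : 2 <= s.

Definition phi_terms (a b da db : R) : list eterm :=
  [ ET 1 (a + b) (da + db);
    ET 1 (r - 1 - a - b) (- (da + db));
    ET (- (2 / (s - 1))) b db;
    ET (-1) a da;
    ET (- (1 / (s * (s - 1)))) (r * s - r - s - s * b) (- (s * db));
    ET (- (1 / (s - 1))) (1 - (s - 1) * a - b) (- ((s - 1) * da + db)) ].

Lemma phi_along a b da db t :
  phi rn sn (a + t * da) (b + t * db)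
  = (a + b + t * (da + db)) * ln (r - 1) + esum (phi_terms a b da db) t.
Proof.
  unfold phi, esum, phi_terms, arg; simpl.
  replace (a + t * da + (b + t * db)) with (a + b + (da + db) * t) by ring.
  replace (r - 1 - (a + t * da) - (b + t * db)) with (r - 1 - a - b + - (da + db) * t) by ring.
  replace (r * s - r - s - s * (b + t * db)) with (r * s - r - s - s * b + - (s * db) * t) by ring.
  replace (1 - (s - 1) * (a + t * da) - (b + t * db))
    with (1 - (s - 1) * a - b + - ((s - 1) * da + db) * t) by ring.
  rewrite (Rmult_comm t da), (Rmult_comm t db). ring.
Qed.

Lemma feasible_domphi a b da db t :
  feasible (phi_terms a b da db) t -> domphi rn sn (a + t * da) (b + t * db).
Proof.
  unfold feasible, phi_terms, arg; simpl.
  intro Hf. repeat rewrite List.Forall_cons_iff in Hf.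
  destruct Hf as [_ [H2 [H3 [H4 [H5 [H6 _]]]]]]; simpl in *.
  rewrite (Rmult_comm t da), (Rmult_comm t db).
  unfold domphi, inK. repeat split; lra.
Qed.

Lemma phi_increases_along a b da db eps :
  List.Forall admissible (phi_terms a b da db) ->
  List.Exists active (phi_terms a b da db) -> 0 < eps ->
  exists a' b', domphi rn sn a' b' /\ Rabs (a' - a) < eps /\ Rabs (b' - b) < eps
    /\ phi rn sn a b < phi rn sn a' b'.
Proof.
  intros Hadm Hact He.
  set (M := 1 + Rabs da + Rabs db).
  assert (HM : 1 <= M) by (pose proof (Rabs_pos da); pose proof (Rabs_pos db); unfold M; lra).
  destruct (esum_increases _ ((da + db) * ln (r - 1)) (eps / M) Hadm Hact)
    as [t [Ht [Hf Hinc]]]; [apply Rdiv_lt_0_compat; lra |].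
  assert (HtM : t * M < eps).
  { destruct Ht as [_ Ht]. apply (Rmult_lt_compat_r M) in Ht; [| lra].
    unfold Rdiv in Ht. rewrite Rmult_assoc, Rinv_l, Rmult_1_r in Ht by lra. exact Ht. }
  exists (a + t * da), (b + t * db).
  split; [now apply feasible_domphi |].
  replace (a + t * da - a) with (t * da) by ring.
  replace (b + t * db - b) with (t * db) by ring.
  rewrite !Rabs_mult, (Rabs_right t) by lra.
  pose proof (Rabs_pos da). pose proof (Rabs_pos db).
  split; [unfold M in HtM; nra | split; [unfold M in HtM; nra |]].
  rewrite phi_along. pose proof (phi_along a b da db 0) as Hstart.
  rewrite !Rmult_0_l, !Rplus_0_r in Hstart. rewrite Hstart. lra.
Qed.

Lemma hypotenuse_slack a b : (3 <= r \/ 3 <= s) ->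
  domphi rn sn a b -> 0 < r - 1 - a - b.
Proof.
  intros H3 [[ha [hb hc]] [hB hD]].
  destruct (Rlt_or_le 0 (r - 1 - a - b)) as [H | H]; [exact H | exfalso].
  assert (Hab : a + b <= 1) by nra.
  destruct H3 as [H3 | H3]; [lra |].
  assert (a <= (s - 2) * a) by nra.
  assert (a = 0) by nra. subst a.
  assert (Hb : b = 1) by lra. assert (Hr2 : r = 2) by lra.
  rewrite Hb, Hr2 in hD. lra.
Qed.

Local Ltac admissible_terms :=
  repeat (apply List.Forall_cons;
          [ first [ apply admissible_pos; simpl; lra
                  | apply admissible_nonincreasing; simpl; first [lra | nra] ] |]);
  apply List.Forall_nil.

Lemma local_max_interior a b : 0 < r * s - r - s -> (3 <= r \/ 3 <= s) ->
  local_max_phi rn sn a b -> (a = 0 /\ b = 0) \/ intK sn a b.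
Proof.
  intros hk H3 [Hd [eps [He Hloc]]].
  pose proof (hypotenuse_slack a b H3 Hd) as hB.
  pose proof Hd as [[ha [hb hc]] [_ hD]].
  assert (Hs1 : 0 < s - 1) by lra.
  assert (Hw : 0 < 2 / (s - 1) /\ 0 < 1 / (s * (s - 1)) /\ 0 < 1 / (s - 1)).
  { repeat split; apply Rdiv_lt_0_compat; try apply Rmult_lt_0_compat; lra. }
  assert (Hnot : forall da db, 0 < a + b ->
            List.Forall admissible (phi_terms a b da db) ->
            List.Exists active (phi_terms a b da db) -> False).
  { intros da db Hab Hadm Hact.
    destruct (phi_increases_along a b da db eps Hadm Hact He) as [a' [b' [Hd' [Ha' [Hb' Hlt]]]]].
    specialize (Hloc a' b' Hd' Ha' Hb'). lra. }
  destruct (Req_dec a 0) as [-> | na]; destruct (Req_dec b 0) as [-> | nb].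
  - left; split; reflexivity.
  -
    exfalso. apply (Hnot 1 (- (s - 1))); [lra | admissible_terms |].
    do 3 apply List.Exists_cons_tl. apply List.Exists_cons_hd; unfold active; simpl; lra.
  -
    exfalso. apply (Hnot (-1) 1); [lra | admissible_terms |].
    do 2 apply List.Exists_cons_tl. apply List.Exists_cons_hd; unfold active; simpl; lra.
  - destruct (Rlt_or_le ((s - 1) * a + b) 1) as [Hlt | Hle].
    + right. unfold intK. repeat split; lra.
    +
      exfalso. apply (Hnot (-1) 0); [lra | admissible_terms |].
      do 5 apply List.Exists_cons_tl. apply List.Exists_cons_hd; unfold active; simpl; lra.
Qed.

End Boundary.

Section Stationary.

Variables rn sn : nat.
Local Notation r := (INR rn).
Local Notation s := (INR sn).
Local Notation k := (INR rn * INR sn - INR rn - INR sn).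
Local Notation d := (denom rn sn).
Local Notation alpha := (alphax rn sn).
Local Notation beta := (betax rn sn).

Hypothesis hr : 2 <= r.
Hypothesis hsn : (2 <= sn)%nat.
Hypothesis hk : 0 < k.

Lemma s_ge_2 : 2 <= s.
Proof. apply (le_INR 2) in hsn. simpl in hsn. lra. Qed.

(* The partial derivatives of phi at a regular point. *)
Definition Pa (a b : R) : R :=
  ln (r - 1) + ln (a + b) - ln (r - 1 - a - b) - ln a + ln (1 - (s - 1) * a - b).

Definition Pb (a b : R) : R :=
  ln (r - 1) + ln (a + b) - ln (r - 1 - a - b)
  + (ln (r * s - r - s - s * b) + ln (1 - (s - 1) * a - b) - 2 * ln b) / (s - 1).

Lemma phi_chain (A B : R -> R) x dA dB :
  is_derive A x dA -> is_derive B x dB -> regphi rn sn (A x) (B x) ->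
  is_derive (fun y => phi rn sn (A y) (B y)) x (dA * Pa (A x) (B x) + dB * Pb (A x) (B x)).
Proof.
  intros HA HB [h1 [h2 [h3 [h4 h5]]]].
  pose proof s_ge_2.
  assert (Dg : forall y, 0 < y -> Derive g y = ln y + 1)
    by (intros y Hy; apply is_derive_unique, is_derive_g, Hy).
  assert (Eg : forall y, 0 < y -> ex_derive g y)
    by (intros y Hy; eexists; apply is_derive_g, Hy).
  unfold phi, Pa, Pb.
  auto_derive.
  - repeat split; try (eexists; eassumption); apply Eg; lra.
  - change (Derive (fun y => A y) x) with (Derive A x).
    change (Derive (fun y => B y) x) with (Derive B x).
    rewrite (is_derive_unique _ _ _ HA), (is_derive_unique _ _ _ HB).
    replace (r - 1 + - A x + - B x) with (r - 1 - A x - B x) by ring.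
    replace (r * s - r - s + - (s * B x)) with (r * s - r - s - s * B x) by ring.
    replace (1 + - ((s - 1) * A x) + - B x) with (1 - (s - 1) * A x - B x) by ring.
    rewrite !Dg by lra.
    field. lra.
Qed.

Lemma denom_factor x : (r - 1) * d x = (k + 1 + x) * (r + x).
Proof. unfold denom. field. lra. Qed.

Lemma denom_pos x : -1 < x -> 0 < d x.
Proof.
  intro Hx. apply (Rmult_lt_reg_l (r - 1)); [lra |].
  rewrite Rmult_0_r, denom_factor. apply Rmult_lt_0_compat; lra.
Qed.

(* The arguments of the logarithms in Pa and Pb factor along the curve. *)
Lemma curve_sum x : -1 < x -> alpha x + beta x = (k + 1 + x) / d x.
Proof. intro Hx. pose proof (denom_pos x Hx). unfold alphax, betax. field. lra. Qed.

Lemma curve_slack x : -1 < x -> r - 1 - alpha x - beta x = (k + 1 + x) * (r - 1 + x) / d x.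
Proof.
  intro Hx. pose proof (denom_pos x Hx).
  unfold alphax, betax.
  transitivity (((r - 1) * d x - (1 + x) - k) / d x); [field; lra |].
  rewrite denom_factor. field. lra.
Qed.

Lemma curve_edge x : -1 < x ->
  1 - (s - 1) * alpha x - beta x = (1 + x) * (r - 1 + x) / ((r - 1) * d x).
Proof.
  intro Hx. pose proof (denom_pos x Hx).
  unfold alphax, betax.
  transitivity ((d x - (s - 1) * (1 + x) - k) / d x); [field; lra |].
  replace (d x - (s - 1) * (1 + x) - k) with ((1 + x) * (r - 1 + x) / (r - 1))
    by (unfold denom; field; lra).
  field. split; lra.
Qed.

Lemma curve_b x : -1 < x -> k - s * beta x = k * (d x - s) / d x.
Proof. intro Hx. pose proof (denom_pos x Hx). unfold betax. field. lra. Qed.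

Lemma denom_sub_s x : d x - s = k + s * x + x * (x + 1) / (r - 1).
Proof. unfold denom. ring. Qed.

Local Ltac positive :=
  repeat (apply Rdiv_lt_0_compat || apply Rmult_lt_0_compat || apply pow_lt); lra.

Lemma Pa_on_curve x : -1 < x -> Pa (alpha x) (beta x) = 0.
Proof.
  intro Hx. pose proof (denom_pos x Hx).
  unfold Pa. rewrite curve_sum, curve_slack, curve_edge by exact Hx.
  unfold alphax.
  rewrite !ln_div, !ln_mult by positive. ring.
Qed.

Lemma Pb_on_curve x : -1 < x -> s < d x ->
  (s - 1) * Pb (alpha x) (beta x)
  = ln ((1 + x) * (d x - s)) - ln (k * ((r - 1 + x) / (r - 1)) ^ (sn - 2)).
Proof.
  intros Hx Hs. pose proof (denom_pos x Hx). pose proof s_ge_2.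
  unfold Pb. rewrite curve_sum, curve_slack, curve_edge, curve_b by exact Hx.
  unfold betax.
  rewrite !ln_div, !ln_mult by positive.
  rewrite ln_pow, ln_div, minus_INR by (exact hsn || positive).
  simpl (INR 2). field. lra.
Qed.

Lemma star_of_Pb x : -1 < x -> s < d x -> Pb (alpha x) (beta x) = 0 -> star rn sn x.
Proof.
  intros Hx Hs HPb. pose proof (denom_pos x Hx).
  pose proof (Pb_on_curve x Hx Hs) as E0. rewrite HPb, Rmult_0_r in E0.
  assert (E : ln ((1 + x) * (d x - s)) = ln (k * ((r - 1 + x) / (r - 1)) ^ (sn - 2)))
    by lra.
  apply ln_inv in E; [| positive | positive].
  unfold star.
  replace (1 + x / (r - 1)) with ((r - 1 + x) / (r - 1)) by (field; lra).
  rewrite <- denom_sub_s. lra.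
Qed.

Lemma denom_gt_s x : -1 < x -> 0 < k - s * beta x -> s < d x.
Proof.
  intros Hx Hb. pose proof (denom_pos x Hx).
  rewrite curve_b in Hb by exact Hx.
  assert (0 < k * (d x - s)).
  { replace (k * (d x - s)) with (k * (d x - s) / d x * d x) by (field; lra).
    apply Rmult_lt_0_compat; lra. }
  nra.
Qed.

Lemma denom_derive x : is_derive d x (s + (2 * x + 1) / (r - 1)).
Proof. unfold denom. auto_derive; [exact I |]. field. lra. Qed.

Lemma beta_derive x : -1 < x ->
  is_derive beta x (- k * (s + (2 * x + 1) / (r - 1)) / d x ^ 2).
Proof.
  intro Hx. pose proof (denom_pos x Hx).
  replace (- k * (s + (2 * x + 1) / (r - 1)) / d x ^ 2)
    with ((0 * d x - k * (s + (2 * x + 1) / (r - 1))) / d x ^ 2) by (field; lra).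
  unfold betax.
  apply (is_derive_div (fun _ => k) d); [exact (is_derive_const k x) | apply denom_derive | lra].
Qed.

Lemma alpha_derivable x : -1 < x -> ex_derive alpha x.
Proof.
  intro Hx. pose proof (denom_pos x Hx).
  eexists. unfold alphax.
  apply (is_derive_div (fun y => 1 + y) d); [| apply denom_derive | lra].
  auto_derive; [exact I | reflexivity].
Qed.

(* Part (c): beta is strictly decreasing and Pa = 0 on the curve, so
   f' = beta' * Pb vanishes only where Pb does, i.e. where (star) holds. *)
Lemma curve_stationary_star x : -1 < x -> regphi rn sn (alpha x) (beta x) ->
  is_derive (fx rn sn) x 0 -> star rn sn x.
Proof.
  intros Hx Hreg Hf.
  destruct (alpha_derivable x Hx) as [dA HdA].
  pose proof (phi_chain _ _ x _ _ HdA (beta_derive x Hx) Hreg) as Hchain.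
  apply is_derive_unique in Hchain. apply is_derive_unique in Hf.
  change (fun y => phi rn sn (alpha y) (beta y)) with (fx rn sn) in Hchain.
  rewrite Hf, Pa_on_curve, Rmult_0_r, Rplus_0_l in Hchain by exact Hx.
  pose proof (denom_pos x Hx). pose proof s_ge_2.
  assert (Hslope : - k * (s + (2 * x + 1) / (r - 1)) / d x ^ 2 <> 0).
  { assert (-1 < (2 * x + 1) / (r - 1)).
    { apply (Rmult_lt_reg_r (r - 1)); [lra |].
      unfold Rdiv. rewrite Rmult_assoc, Rinv_l by lra. lra. }
    assert (0 < k * (s + (2 * x + 1) / (r - 1)) / d x ^ 2)
      by (apply Rdiv_lt_0_compat; [apply Rmult_lt_0_compat | apply pow_lt]; lra).
    replace (- k * (s + (2 * x + 1) / (r - 1)) / d x ^ 2)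
      with (- (k * (s + (2 * x + 1) / (r - 1)) / d x ^ 2)) by (field; lra).
    lra. }
  symmetry in Hchain. apply Rmult_integral in Hchain as [Hzero | HPb]; [contradiction |].
  destruct Hreg as [_ [_ [_ [Hb _]]]].
  apply star_of_Pb; [exact Hx | now apply denom_gt_s | exact HPb].
Qed.

Lemma stationary_partials a b : regphi rn sn a b -> stationary_phi rn sn a b ->
  Pa a b = 0 /\ Pb a b = 0.
Proof.
  intros Hreg [Sa Sb].
  pose proof (phi_chain (fun y => y) (fun _ => b) a 1 0 (is_derive_id a)
                (is_derive_const b a) Hreg) as Ha.
  pose proof (phi_chain (fun _ => a) (fun y => y) b 0 1 (is_derive_const a b)
                (is_derive_id b) Hreg) as Hb.
  cbv beta in Ha, Hb.
  apply is_derive_unique in Ha, Hb, Sa, Sb. rewrite Sa in Ha. rewrite Sb in Hb.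
  split; lra.
Qed.

Lemma Pa_zero_on_curve a b : regphi rn sn a b -> Pa a b = 0 ->
  exists x, -1 < x /\ a = alpha x /\ b = beta x.
Proof.
  intros [h1 [h2 [h3 [h4 h5]]]] HPa.
  assert (E : (r - 1) * (a + b) * (1 - (s - 1) * a - b) = a * (r - 1 - a - b)).
  { apply ln_inv; [repeat apply Rmult_lt_0_compat; lra | apply Rmult_lt_0_compat; lra |].
    unfold Pa in HPa. rewrite !ln_mult by (try apply Rmult_lt_0_compat; lra). lra. }
  assert (key : (r - 1) * b = (a + b) * (k * a + (r - 1) * b)) by nra.
  set (x := k * a / b - 1).
  assert (Hx : -1 < x).
  { assert (0 < k * a / b) by (apply Rdiv_lt_0_compat; [apply Rmult_lt_0_compat |]; lra).
    unfold x. lra. }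
  assert (Hd : d x = k / b).
  { apply (Rmult_eq_reg_l ((r - 1) * b ^ 2));
      [| apply Rmult_integral_contrapositive; split; [lra | apply pow_nonzero; lra]].
    transitivity (k * ((a + b) * (k * a + (r - 1) * b))).
    - unfold denom, x. field. lra.
    - rewrite <- key. field. lra. }
  exists x. split; [exact Hx | split].
  - unfold alphax. rewrite Hd. unfold x. field. lra.
  - unfold betax. rewrite Hd. field. lra.
Qed.

Lemma stationary_on_curve a b : regphi rn sn a b -> stationary_phi rn sn a b ->
  exists x, -1 < x /\ a = alpha x /\ b = beta x /\ star rn sn x.
Proof.
  intros Hreg Hst.
  destruct (stationary_partials a b Hreg Hst) as [HPa HPb].
  destruct (Pa_zero_on_curve a b Hreg HPa) as [x [Hx [-> ->]]].
  exists x. repeat split; [exact Hx |].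
  destruct Hreg as [_ [_ [_ [Hb _]]]].
  apply star_of_Pb; [exact Hx | now apply denom_gt_s | exact HPb].
Qed.

End Stationary.

Lemma three_le_r_or_s (r s : nat) : (2 <= r)%nat -> (2 <= s)%nat ->
  ~ (r = 2%nat /\ s = 2%nat) -> 3 <= INR r \/ 3 <= INR s.
Proof.
  intros hr hs hn.
  replace 3 with (INR 3) by (simpl; ring).
  destruct (Nat.eq_dec r 2) as [-> | ne]; [right | left]; apply le_INR; lia.
Qed.

Lemma rs_sub_pos r s : 2 <= r -> 2 <= s -> (3 <= r \/ 3 <= s) -> 0 < r * s - r - s.
Proof. intros hr hs [H | H]; nra. Qed.

Theorem lemmaA1 (r s : nat) (hr : (2 <= r)%nat) (hs : (2 <= s)%nat)
  (hrs : ((5 <= s)%nat /\ exists rho : R, is_rho (INR s) rho /\ rho < INR r)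
         \/ ((s <= 4)%nat /\ ~ (r = 2%nat /\ s = 2%nat))) :
  (* (a) *)
  (forall a b : R, local_max_phi r s a b -> (a = 0 /\ b = 0) \/ intK s a b)
  /\
  (* (b) *)
  (forall a b : R, intK s a b -> regphi r s a b -> stationary_phi r s a b ->
     exists x : R, -1 < x /\ a = alphax r s x /\ b = betax r s x /\ star r s x)
  /\
  (* (c) *)
  (forall x : R, -1 < x -> regphi r s (alphax r s x) (betax r s x) ->
     is_derive (fx r s) x 0 -> star r s x).
Proof.
  assert (hn : ~ (r = 2%nat /\ s = 2%nat)) by (destruct hrs as [[h5 _] | [_ h]]; lia).
  pose proof (le_INR 2 r hr) as Hr. pose proof (le_INR 2 s hs) as Hs. simpl in Hr, Hs.
  pose proof (three_le_r_or_s r s hr hs hn) as H3.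
  pose proof (rs_sub_pos _ _ Hr Hs H3) as hk.
  split; [| split].
  - intros a b. exact (local_max_interior r s Hr Hs a b hk H3).
  - intros a b _. exact (stationary_on_curve r s Hr hs hk a b).
  - intros x. exact (curve_stationary_star r s Hr hs hk x).
Qed.
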